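(* Let $G$ be a connected bipartite graph with vertex set $\{u_1,\dots,u_n\}$ ($n\ge2$), let $H$ be a non-empty graph, and let $\mathcal{H}=\{H_1,\dots,H_n\}$ be a family of graphs such that $\mathcal{H}-\Phi=\{H\}$, i.e. exactly one graph of the family has an edge and it is $H$, all others being edgeless. Then $\dim_l(G\circ\mathcal{H})=\operatorname{adim}_l(H)+1$ if $H\in\mathcal{G}$, and $\dim_l(G\circ\mathcal{H})=\operatorname{adim}_l(H)$ otherwise.
   Context: All graphs are finite and simple with at least one vertex; a non-empty graph is one with at least one edge; $\Phi$ is the class of edgeless graphs. $d_G$ is shortest-path distance ($+\infty$ between components), $d_{G,2}=\min\{d_G,2\}$; $s$ distinguishes $x,y$ w.r.t. $d$ if $d(s,x)\ne d(s,y)$. $\dim_l(G)$: minimum size of $S\subseteq V(G)$ such that any two adjacent vertices are distinguished w.r.t. $d_G$ by some vertex of $S$. $\operatorname{adim}_l(H)$: minimum size of $S\subseteq V(H)$ such that any two adjacent vertices are distinguished w.r.t. $d_{H,2}$ by some vertex of $S$; minimum such sets are local adjacency bases. $\mathcal{G}$: class of graphs $H$ such that every local adjacency basis $B$ of $H$ satisfies $B\subseteq N_H(v)$ for some $v\in V(H)$. Lexicographic product $G\circ\mathcal{H}$: vertex set $\bigcup_i\{u_i\}\times V(H_i)$, $(u_i,v)\sim(u_j,w)$ iff $u_iu_j\in E(G)$, or $i=j$ and $vw\in E(H_i)$. *)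

From mathcomp Require Import all_boot.
Set Implicit Arguments. Unset Strict Implicit. Unset Printing Implicit Defensive.

Definition simple_graph (T : finType) (e : rel T) : Prop :=
  symmetric e /\ irreflexive e.

Definition nonempty_graph (T : finType) (e : rel T) : Prop :=
  exists x y, e x y.

Fixpoint walk (T : finType) (e : rel T) (k : nat) (x y : T) : bool :=
  match k with
  | 0 => x == y
  | k'.+1 => [exists z, e x z && walk e k' z y]
  end.

(* Shortest-path distance; None encodes +infinity. A shortest walk is a path,
   hence has fewer than #|T| edges, so searching k < #|T| suffices. *)
Definition dist (T : finType) (e : rel T) (x y : T) : option nat :=
  let k := find (fun k => walk e k x y) (iota 0 #|T|) in
  if k < #|T| then Some k else None.

Definition dist2 (T : finType) (e : rel T) (x y : T) : nat :=
  match dist e x y with Some k => minn k 2 | None => 2 end.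

Definition local_metric_gen (T : finType) (e : rel T) (S : {set T}) : bool :=
  [forall x, forall y, e x y ==> [exists s in S, dist e s x != dist e s y]].

Definition local_adj_gen (T : finType) (e : rel T) (S : {set T}) : bool :=
  [forall x, forall y, e x y ==> [exists s in S, dist2 e s x != dist2 e s y]].

(* minimum cardinalities (setT is always a generator, used as default) *)
Definition ldim (T : finType) (e : rel T) : nat :=
  #|[arg min_(S < [set: T] | local_metric_gen e S) #|S|]|.

Definition ladim (T : finType) (e : rel T) : nat :=
  #|[arg min_(S < [set: T] | local_adj_gen e S) #|S|]|.

Definition local_adj_basis (T : finType) (e : rel T) (B : {set T}) : Prop :=
  local_adj_gen e B /\ #|B| = ladim e.

Definition open_nbhd (T : finType) (e : rel T) (v : T) : {set T} :=
  [set w | e v w].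

Definition classG (T : finType) (e : rel T) : Prop :=
  forall B : {set T}, local_adj_basis e B -> exists v, B \subset open_nbhd e v.

Definition connected_graph (T : finType) (e : rel T) : Prop :=
  forall x y, connect e x y.

Definition bipartite (T : finType) (e : rel T) : Prop :=
  exists f : T -> bool, forall x y, e x y -> f x != f y.

Definition lexprod (n : nat) (G : rel 'I_n) (V : 'I_n -> finType)
  (E : forall i, rel (V i)) : rel {i : 'I_n & V i} :=
  fun x y => G (tag x) (tag y) ||
             ((tag x == tag y) && E (tag x) (tagged x) (tagged_as x y)).

From mathcomp Require Import all_boot.
Set Implicit Arguments. Unset Strict Implicit. Unset Printing Implicit Defensive.

(* Distances in G o H between different fibres are those of G, and inside a
   fibre they are min(d_H, 2), since two vertices of one fibre have a common
   neighbour in an adjacent fibre. Hence a local metric generator S restricts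
   on the fibre of H to a local adjacency generator, and an edge between
   adjacent fibres is always resolved by a vertex of a third fibre (bipartite
   parity of distances in G) or by a vertex of one of its fibres that is not
   adjacent to the endpoint lying there. So the lift of a local adjacency basis
   B of H becomes a local metric generator once one vertex of a fibre adjacent
   to H's is added, and already is one when B lies in no open neighbourhood.
   Conversely, if every basis lies in some N(v) and |S| = adim_l(H), then S is
   the lift of such a basis, and (u_j, v) together with any vertex of an
   adjacent fibre are at distance 1 from all of S. *)

Section Distance.
Variables (T : finType) (e : rel T).

Lemma walk_path x p : path e x p -> walk e (size p) x (last x p).
Proof.
elim: p x => [|y p IHp] x /=; first by rewrite eqxx.
by case/andP=> exy pth; apply/existsP; exists y; rewrite exy IHp.
Qed.

Lemma walk_connect k x y : walk e k x y -> connect e x y.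
Proof.
elim: k x => [|k IHk] x /=; first by move/eqP->.
by case/existsP=> z /andP[exz /IHk]; apply: connect_trans (connect1 exz).
Qed.

Lemma connect_walk x y : connect e x y -> exists2 m, m < #|T| & walk e m x y.
Proof.
case/connectP=> p pth ->; case/shortenP: pth => p' pth' up' _.
exists (size p'); last exact: walk_path.
by have := max_card (mem (x :: p')); rewrite (card_uniqP up').
Qed.

Lemma walk1 x y : walk e 1 x y = e x y.
Proof.
apply/existsP/idP => [[z /andP[exz /eqP <-]] //|exy].
by exists y; rewrite exy eqxx.
Qed.

Lemma dist_someP x y m : dist e x y = Some m ->
  walk e m x y /\ forall k, k < m -> ~~ walk e k x y.
Proof.
rewrite /dist; set s := iota 0 #|T|; set f := find _ s; case: ifP => // lt [<-].
have nth_s k : k < #|T| -> nth 0 s k = k by move=> lk; rewrite nth_iota.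
split=> [|k lk].
  rewrite -[f in walk e f](nth_s f lt).
  by apply: (nth_find 0 (a := fun k => walk e k x y)); rewrite has_find size_iota.
by rewrite -[k in walk e k](nth_s k (ltn_trans lk lt)) (before_find 0 lk).
Qed.

Lemma dist_le_walk x y m : walk e m x y -> exists2 m', dist e x y = Some m' & m' <= m.
Proof.
have short k : walk e k x y -> k < #|T| -> exists2 m', dist e x y = Some m' & m' <= k.
  move=> w lk; rewrite /dist; set f := find _ _.
  have lf : f <= k.
    rewrite leqNgt; apply/negP=> lkf.
    by have := before_find 0 lkf; rewrite nth_iota // w.
  by exists f; rewrite ?(leq_ltn_trans lf lk).
move=> w; have [m1 lm1 w1] := connect_walk (walk_connect w).
case: (ltnP m #|T|) => [lm | gm]; first exact: short.
have [m' dm lm'] := short _ w1 lm1.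
by exists m'; rewrite ?(leq_trans lm' (ltnW (leq_trans lm1 gm))).
Qed.

Lemma dist_refl x : dist e x x = Some 0.
Proof. by have [[|m'] -> //] := @dist_le_walk x x 0 (eqxx x). Qed.

Lemma dist_eq0 x y : dist e x y = Some 0 -> x = y.
Proof. by case/dist_someP => /= /eqP. Qed.

Lemma dist_eq1 x y : dist e x y = Some 1 -> e x y.
Proof. by case/dist_someP; rewrite walk1. Qed.

Lemma dist_common_adj x y z : x != y -> ~~ e x y -> e x z -> e z y ->
  dist e x y = Some 2.
Proof.
move=> xy nxy exz ezy.
have w2 : walk e 2 x y by rewrite -walk1 in ezy; apply/existsP; exists z; rewrite exz.
have [[|[|[|m']]] dm //] := dist_le_walk w2.
  by move/dist_eq0: dm xy => ->; rewrite eqxx.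
by move/dist_eq1: dm nxy => ->.
Qed.

Hypothesis irr : irreflexive e.

Lemma dist_adj x y : e x y -> dist e x y = Some 1.
Proof.
move=> exy; have w1 : walk e 1 x y by rewrite walk1.
have [[|[|m']] dm //] := dist_le_walk w1.
by move/dist_eq0: dm exy => ->; rewrite irr.
Qed.

Lemma dist2E x y : dist2 e x y = if x == y then 0 else if e x y then 1 else 2.
Proof.
rewrite /dist2; case: eqP => [->|xy]; first by rewrite dist_refl.
case: ifP => exy; first by rewrite dist_adj.
case dm: (dist e x y) => [[|[|m]]|] //; first by move/dist_eq0: dm.
by move/dist_eq1: dm; rewrite exy.
Qed.

End Distance.

Lemma dist_walk_dom (T T' : finType) (e : rel T) (e' : rel T') x y x' y' :
    (forall k, walk e k x y -> exists2 k', k' <= k & walk e' k' x' y') ->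
  forall m, dist e x y = Some m -> exists2 m', dist e' x' y' = Some m' & m' <= m.
Proof.
move=> dom m /dist_someP[w _]; have [k' lk w'] := dom m w.
have [m' dm' lm'] := dist_le_walk w'.
by exists m'; rewrite ?(leq_trans lm' lk).
Qed.

Lemma eq_dist_walks (T T' : finType) (e : rel T) (e' : rel T') x y x' y' :
    (forall k, walk e k x y -> exists2 k', k' <= k & walk e' k' x' y') ->
    (forall k, walk e' k x' y' -> exists2 k', k' <= k & walk e k' x y) ->
  dist e x y = dist e' x' y'.
Proof.
move=> dom dom'; case d: (dist e x y) => [m|]; case d': (dist e' x' y') => [m'|] //.
- have [m1 d1 l1] := dist_walk_dom dom d; have [m2 d2 l2] := dist_walk_dom dom' d'.
  move: d1 d2 l1 l2; rewrite d d' => -[<-] [<-] l1 l2.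
  by rewrite (@anti_leq m m') ?l1 ?l2.
- by have [m1] := dist_walk_dom dom d; rewrite d'.
- by have [m1] := dist_walk_dom dom' d'; rewrite d.
Qed.

Section GraphFacts.
Variables (T : finType) (e : rel T).

Lemma bipartite_walk_parity (f : T -> bool) :
    (forall x y, e x y -> f x != f y) ->
  forall m x y, walk e m x y -> f y = odd m (+) f x.
Proof.
move=> bip; elim=> [|m IHm] x y /=; first by move/eqP->.
case/existsP=> z /andP[exz /IHm->]; move: (bip _ _ exz).
by case: (f x); case: (f z); case: (odd m).
Qed.

Lemma bipartite_dist_adj_neq x y z :
  bipartite e -> connected_graph e -> e y z -> dist e x y != dist e x z.
Proof.
case=> f bip con eyz.
have [m _ /dist_le_walk[my dy _]] := connect_walk (con x y).
have [m' _ /dist_le_walk[mz dz _]] := connect_walk (con x z).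
rewrite dy dz; apply: contra_neq (bip _ _ eyz) => [[myz]].
case/dist_someP: dy => /(bipartite_walk_parity bip)-> _.
by case/dist_someP: dz => /(bipartite_walk_parity bip)-> _; rewrite myz.
Qed.

Lemma connected_neighbour x :
  connected_graph e -> 1 < #|T| -> exists y, e x y.
Proof.
move=> con /card_gt1P[y1 [y2 [_ _ y12]]].
have [y xy] : exists2 y, x != y & true.
  by case: (eqVneq x y1) => [xy1|]; [exists y2; rewrite // xy1 | exists y1].
have [[|m] _] := connect_walk (con x y) => /=; first by rewrite (negbTE xy).
by case/existsP=> z /andP[exz _]; exists z.
Qed.

Lemma local_adj_gen_nonempty (B : {set T}) :
  nonempty_graph e -> local_adj_gen e B -> exists b, b \in B.
Proof.
case=> x [y exy] /forallP/(_ x)/forallP/(_ y)/implyP/(_ exy)/existsP[b /andP[bB _]].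
by exists b.
Qed.

Lemma not_classG_basis :
  ~ classG e -> exists2 B, local_adj_basis e B & forall v, ~~ (B \subset open_nbhd e v).
Proof.
move=> notG; case: (boolP [exists B, [&& local_adj_gen e B, #|B| == ladim e &
    [forall v, ~~ (B \subset open_nbhd e v)]]]) => [/existsP[B /and3P[gB /eqP cB /forallP]]|].
  by exists B.
move/existsPn=> noB; case: notG => B [gB cB].
have /forallPn[v /negbNE sub] : ~~ [forall v, ~~ (B \subset open_nbhd e v)].
  by have := noB B; rewrite gB cB eqxx.
by exists v.
Qed.

Hypothesis irr : irreflexive e.

Lemma local_metric_genT : local_metric_gen e [set: T].
Proof.
apply/forallP=> x; apply/forallP=> y; apply/implyP=> exy; apply/existsP.
exists x; rewrite inE dist_refl; apply/eqP=> /esym/dist_eq0 xy.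
by rewrite xy irr in exy.
Qed.

Lemma local_adj_genT : local_adj_gen e [set: T].
Proof.
apply/forallP=> x; apply/forallP=> y; apply/implyP=> exy; apply/existsP.
by exists x; rewrite inE !dist2E // eqxx exy; case: (eqVneq x y) exy => [->|]; rewrite ?irr.
Qed.

Lemma ldim_min S : local_metric_gen e S -> ldim e <= #|S|.
Proof. by rewrite /ldim; case: arg_minnP => [|S0 _]; [exact: local_metric_genT|apply]. Qed.

Lemma ldim_attained : exists2 S, local_metric_gen e S & #|S| = ldim e.
Proof. by rewrite /ldim; case: arg_minnP => [|S0]; [exact: local_metric_genT|exists S0]. Qed.

Lemma ladim_min B : local_adj_gen e B -> ladim e <= #|B|.
Proof. by rewrite /ladim; case: arg_minnP => [|B0 _]; [exact: local_adj_genT|apply]. Qed.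

Lemma ladim_attained : exists2 B, local_adj_gen e B & #|B| = ladim e.
Proof. by rewrite /ladim; case: arg_minnP => [|B0]; [exact: local_adj_genT|exists B0]. Qed.

End GraphFacts.

Section LexicographicProduct.
Variables (n : nat) (G : rel 'I_n) (V : 'I_n -> finType) (E : forall i, rel (V i)).
Arguments E : clear implicits.
Hypotheses (symG : symmetric G) (irrG : irreflexive G).
Hypothesis irrE : forall i : 'I_n, irreflexive (E i).
Hypothesis neV : forall i : 'I_n, 0 < #|V i|.

Local Notation P := (lexprod G E).

Lemma lexprod_fibre i (a b : V i) : P (Tagged V a) (Tagged V b) = E i a b.
Proof. by rewrite /lexprod /= irrG eqxx tagged_asE. Qed.

Lemma lexprod_cross i k (a : V i) (b : V k) : i != k -> P (Tagged V a) (Tagged V b) = G i k.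
Proof. by move=> ik; rewrite /lexprod /= (negbTE ik) orbF. Qed.

Lemma lexprod_irr : irreflexive P.
Proof. by case=> i a; rewrite lexprod_fibre irrE. Qed.

Lemma lexprod_walk_tag m u w :
  walk P m u w -> exists2 m', m' <= m & walk G m' (tag u) (tag w).
Proof.
elim: m u => [|m IHm] u /=; first by move/eqP->; exists 0 => //=.
case/existsP=> v /andP[puv /IHm[m' lm' w']].
case/orP: puv => [guv | /andP[/eqP uv _]]; last by exists m'; rewrite ?leqW ?uv.
by exists m'.+1 => //; apply/existsP; exists (tag v); rewrite guv.
Qed.

Lemma lexprod_walk_lift m l i (x : V l) (a : V i) :
  0 < m -> walk G m l i -> walk P m (Tagged V x) (Tagged V a).
Proof.
elim: m l x => [|[|m] IHm] l x // _ /existsP[k /andP[glk wk]]; apply/existsP.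
  by move/eqP: wk => ki; subst i; exists (Tagged V a); rewrite eqxx andbT /lexprod /= glk.
have /card_gt0P[c _] := neV k.
by exists (Tagged V c); apply/andP; split; [rewrite /lexprod /= glk | exact: IHm].
Qed.

Lemma dist_lexprod_cross l i (x : V l) (a : V i) :
  l != i -> dist P (Tagged V x) (Tagged V a) = dist G l i.
Proof.
move=> li; have pos m : walk G m l i -> 0 < m by case: m => //= /eqP eli; rewrite eli eqxx in li.
apply: eq_dist_walks => m w; first exact: lexprod_walk_tag w.
by exists m; rewrite ?lexprod_walk_lift ?pos.
Qed.

Hypothesis nbrG : forall i, exists k, G i k.

Lemma dist_lexprod_fibre i (x a : V i) :
  dist P (Tagged V x) (Tagged V a) = Some (dist2 (E i) x a).
Proof.
rewrite dist2E //; case: eqP => [->|xa]; first exact: dist_refl.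
case: ifP => exa; first by rewrite (dist_adj lexprod_irr) ?lexprod_fibre.
have [k gik] := nbrG i; have /card_gt0P[c _] := neV k.
have ik : i != k by apply: contraTneq gik => ->; rewrite irrG.
apply: (@dist_common_adj _ _ _ _ (Tagged V c)).
- by rewrite eq_Tagged; apply/eqP.
- by rewrite lexprod_fibre exa.
- by rewrite lexprod_cross.
- by rewrite lexprod_cross 1?eq_sym // symG.
Qed.

Lemma lexprod_cross_resolved_in_fibre i k (x a : V i) (b : V k) :
  G i k -> ~~ E i x a -> dist P (Tagged V x) (Tagged V a) != dist P (Tagged V x) (Tagged V b).
Proof.
move=> gik nxa; have ik : i != k by apply: contraTneq gik => ->; rewrite irrG.
rewrite dist_lexprod_fibre (dist_adj lexprod_irr) ?lexprod_cross // dist2E //.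
by rewrite (negbTE nxa); case: (x == a).
Qed.

Definition fibre (i : 'I_n) (S : {set {k : 'I_n & V k}}) : {set V i} :=
  [set a | Tagged V a \in S].

Lemma Tagged_inj i : injective (fun a : V i => Tagged V a).
Proof. by move=> a b /eqP; rewrite eq_Tagged => /eqP. Qed.

Lemma card_fibre_le i S : #|fibre i S| <= #|S|.
Proof.
rewrite -(card_imset _ (@Tagged_inj i)); apply/subset_leq_card/subsetP => u.
by case/imsetP=> a; rewrite inE => aS ->.
Qed.

Lemma local_adj_gen_fibre i S : local_metric_gen P S -> local_adj_gen (E i) (fibre i S).
Proof.
move=> genS; apply/forallP=> a; apply/forallP=> b; apply/implyP=> eab.
have pab : P (Tagged V a) (Tagged V b) by rewrite lexprod_fibre.
move/forallP/(_ (Tagged V a))/forallP/(_ (Tagged V b))/implyP/(_ pab): genS.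
case/existsP=> -[l x] /andP[xS]; case: (eqVneq l i) => [li|li]; last first.
  by rewrite !dist_lexprod_cross // eqxx.
subst l; rewrite !dist_lexprod_fibre => d2; apply/existsP; exists x.
by rewrite inE xS; apply: contra d2 => /eqP->.
Qed.

Lemma ladim_fibre_le_ldim i : ladim (E i) <= ldim P.
Proof.
have [S genS <-] := ldim_attained lexprod_irr.
exact: leq_trans (ladim_min (@irrE i) (local_adj_gen_fibre i genS)) (card_fibre_le i S).
Qed.

Hypotheses (conG : connected_graph G) (bipG : bipartite G).

Lemma lexprod_cross_resolved_outside l i k (x : V l) (a : V i) (b : V k) :
    G i k -> l != i -> l != k ->
  dist P (Tagged V x) (Tagged V a) != dist P (Tagged V x) (Tagged V b).
Proof. by move=> gik li lk; rewrite !dist_lexprod_cross // bipartite_dist_adj_neq. Qed.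

Variable j : 'I_n.
Hypothesis symEj : symmetric (E j).
Hypothesis neEj : nonempty_graph (E j).
Hypothesis edgeless : forall i, i != j -> ~ nonempty_graph (E i).

(* Cross edges ending in the fibre of H are handled by swapping endpoints. *)
Lemma lexprod_local_metric_gen (B : {set V j}) (S : {set {k : 'I_n & V k}}) :
    local_adj_gen (E j) B -> [set Tagged V b | b in B] \subset S ->
    (forall i k (a : V i) (b : V k), G i k -> k != j ->
       exists2 s, s \in S & dist P s (Tagged V a) != dist P s (Tagged V b)) ->
  local_metric_gen P S.
Proof.
move=> genB BS cross; apply/forallP=> -[i a]; apply/forallP=> -[k b]; apply/implyP.
rewrite /lexprod /=; case/orP=> [gik | /andP[/eqP ik]]; last first.
  subst k; rewrite tagged_asE => eab.
  case: (eqVneq i j) => [ij|ij]; last by case: (edgeless ij); exists a, b.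
  subst i; move/forallP/(_ a)/forallP/(_ b)/implyP/(_ eab)/existsP: genB.
  case=> c /andP[cB dc]; apply/existsP; exists (Tagged V c).
  by rewrite (subsetP BS) ?imset_f //= !dist_lexprod_fibre; apply: contra dc => /eqP[->].
apply/existsP; case: (eqVneq k j) => [kj|kj]; last first.
  by have [s sS ds] := cross _ _ a b gik kj; exists s; rewrite sS.
have ij : i != j by rewrite -kj; apply: contraTneq gik => ->; rewrite irrG.
by have [s sS ds] := cross _ _ b a (etrans (symG k i) gik) ij; exists s; rewrite sS eq_sym.
Qed.

Lemma ldim_le_card_adj_gen (B : {set V j}) :
    local_adj_gen (E j) B -> (forall v, ~~ (B \subset open_nbhd (E j) v)) ->
  ldim P <= #|B|.
Proof.
move=> genB notsub; have [b1 b1B] := local_adj_gen_nonempty neEj genB.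
apply: leq_trans (leq_imset_card _ _).
apply/(ldim_min lexprod_irr)/(lexprod_local_metric_gen genB (subxx _)).
move=> i k a b gik kj; case: (eqVneq i j) => [ij|ij]; last first.
  exists (Tagged V b1); first exact: imset_f.
  by apply: lexprod_cross_resolved_outside; rewrite // eq_sym.
subst i; have /subsetPn[c cB nac] := notsub a.
exists (Tagged V c); first exact: imset_f.
by apply: lexprod_cross_resolved_in_fibre; rewrite // symEj; rewrite inE in nac.
Qed.

Lemma ldim_le_ladimS : ldim P <= (ladim (E j)).+1.
Proof.
have [B genB <-] := ladim_attained (@irrE j).
have [b1 b1B] := local_adj_gen_nonempty neEj genB.
have [k0 gjk0] := nbrG j; have /card_gt0P[c _] := neV k0.
have jk0 : j != k0 by apply: contraTneq gjk0 => ->; rewrite irrG.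
set S := Tagged V c |: [set Tagged V b | b in B].
have cardS : #|S| <= #|B|.+1.
  by rewrite cardsU1 (card_imset _ (@Tagged_inj j)); case: (_ \notin _).
apply: leq_trans cardS.
apply/(ldim_min lexprod_irr)/(lexprod_local_metric_gen genB (subsetUr _ _)).
move=> i k a b gik kj; case: (eqVneq i j) => [ij|ij]; last first.
  exists (Tagged V b1); first by rewrite !inE imset_f ?orbT.
  by apply: lexprod_cross_resolved_outside; rewrite // eq_sym.
subst i; exists (Tagged V c); first by rewrite !inE eqxx.
case: (eqVneq k0 k) => [k0k|k0k]; last by apply: lexprod_cross_resolved_outside; rewrite // eq_sym.
subst k; rewrite eq_sym; apply: lexprod_cross_resolved_in_fibre; first by rewrite symG.
by apply/negP=> ecb; apply: (edgeless kj); exists c, b.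
Qed.

Lemma ladim_lt_ldim : classG (E j) -> ladim (E j) < ldim P.
Proof.
move=> inG; rewrite ltnNge; apply/negP=> le_ldim.
have [S genS cardS] := ldim_attained lexprod_irr.
have genB := local_adj_gen_fibre j genS.
have cardB : #|fibre j S| = ladim (E j).
  apply/eqP; rewrite eqn_leq (ladim_min (@irrE j) genB) andbT.
  by rewrite -cardS in le_ldim; exact: leq_trans (card_fibre_le j S) le_ldim.
have [v sub] := inG _ (conj genB cardB).
have S_lift : [set Tagged V b | b in fibre j S] = S.
  apply/eqP; rewrite eqEcard (card_imset _ (@Tagged_inj j)) cardB cardS le_ldim andbT.
  by apply/subsetP=> u /imsetP[b]; rewrite inE => bS ->.
have [k gjk] := nbrG j; have /card_gt0P[c _] := neV k.
have jk : j != k by apply: contraTneq gjk => ->; rewrite irrG.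
have pvc : P (Tagged V v) (Tagged V c) by rewrite lexprod_cross.
move/forallP/(_ (Tagged V v))/forallP/(_ (Tagged V c))/implyP/(_ pvc)/existsP: genS.
rewrite -S_lift => -[_ /andP[/imsetP[x xB ->]]].
have evx : E j v x by move/subsetP: sub => /(_ x xB); rewrite inE.
by rewrite !(dist_adj lexprod_irr) ?eqxx ?lexprod_fibre 1?symEj ?lexprod_cross.
Qed.

End LexicographicProduct.

Theorem corollary4 (n : nat) (G : rel 'I_n) (V : 'I_n -> finType)
  (E : forall i, rel (V i)) (j : 'I_n) :
  2 <= n ->
  simple_graph G -> connected_graph G -> bipartite G ->
  (forall i, simple_graph (E i)) ->
  (forall i, 0 < #|V i|) ->
  nonempty_graph (E j) ->
  (forall i, i != j -> ~ nonempty_graph (E i)) ->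
  (classG (E j) -> ldim (lexprod G E) = (ladim (E j)).+1) /\
  (~ classG (E j) -> ldim (lexprod G E) = ladim (E j)).
Proof.
move=> n2 [symG irrG] conG bipG simpleE neV neEj edgeless.
have irrE i : irreflexive (E i) by case: (simpleE i).
have symEj : symmetric (E j) by case: (simpleE j).
have nbrG i : exists k, G i k by apply: connected_neighbour; rewrite ?card_ord.
split=> [inG | notG]; apply/eqP; rewrite eqn_leq.
  by rewrite ldim_le_ladimS // ladim_lt_ldim.
have [B [genB cardB] notsub] := not_classG_basis notG.
by rewrite ladim_fibre_le_ldim // andbT -cardB ldim_le_card_adj_gen.
Qed.
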